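(* For every countable $S\subseteq(0;1)$ there is a solid open set $A\subseteq2^\omega$, and also a solid closed set $A\subseteq 2^\omega$, such that $\operatorname{ran}\mathcal{D}_A=S\cup\{0,1\}$ and for every $r\in S$ there is exactly one $z\in2^\omega$ with $\mathcal{D}_A(z)=r$.
   Context: $2^{\omega}$ is the Cantor space; $N_s=\{x\in2^\omega:s\subset x\}$; $\mu$ is the coin-tossing measure, $\mu(N_s)=2^{-\mathrm{lh}(s)}$. For measurable $A$, $\mathcal{D}_A(z)=\lim_n\mu(A\cap N_{z\restriction n})/\mu(N_{z\restriction n})$ when the limit exists; $\operatorname{ran}\mathcal{D}_A$ is the set of values attained where defined. $A$ is solid if $\mathcal{D}_A(z)$ exists for every $z\in2^\omega$. *)

From Stdlib Require Import Reals List.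
From Coquelicot Require Import Coquelicot.
Open Scope R_scope.

Definition cantor := nat -> bool.

Definition restr (z : cantor) (n : nat) : list bool := map z (seq 0 n).

Definition N (s : list bool) : cantor -> Prop :=
  fun x => forall i : nat, (i < length s)%nat -> x i = nth i s false.

Definition is_open (A : cantor -> Prop) : Prop :=
  forall x, A x -> exists n : nat, forall y, N (restr x n) y -> A y.
Definition is_closed (A : cantor -> Prop) : Prop :=
  is_open (fun x => ~ A x).

(* coin-tossing (Lebesgue) measure, given as the outer measure
   mu(X) = inf { sum_k 2^-lh(s_k) : X is covered by the N_{s_k} }
   (None entries in a cover are empty pieces).  On Borel sets this is the
   unique measure with mu(N_s) = 2^-lh(s). *)
Definition weight (o : option (list bool)) : R :=
  match o with None => 0 | Some s => (/ 2) ^ length s end.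

Definition cover_sums (X : cantor -> Prop) (r : R) : Prop :=
  exists c : nat -> option (list bool),
    (forall x, X x -> exists k s, c k = Some s /\ N s x) /\
    is_series (fun k => weight (c k)) r.

Definition mu (X : cantor -> Prop) : R := real (Glb_Rbar (cover_sums X)).

Definition density_at (A : cantor -> Prop) (z : cantor) (r : R) : Prop :=
  is_lim_seq (fun n : nat =>
     mu (fun x => A x /\ N (restr z n) x) / mu (N (restr z n))) (Finite r).

Definition solid (A : cantor -> Prop) : Prop :=
  forall z, exists r, density_at A z r.

Definition countable_set (S : R -> Prop) : Prop :=
  exists f : nat -> R, forall r, S r -> exists n, f n = r.

Definition good_density (S : R -> Prop) (A : cantor -> Prop) : Prop :=
  (forall r, (exists z, density_at A z r) <-> (S r \/ r = 0 \/ r = 1)) /\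
  (forall r, S r -> exists! z, density_at A z r).

(* Enumerate S without repetitions as r_n (n >= 1) and let spike n = 0^n 1 0^omega.  The set A
   is defined by scanning the bits of a point: after 0^n 1 0^j with j > n, a further 1 starts a
   comparison of the next j bits with the first j binary digits of r_n, and the point lies in A
   iff its bits are smaller.  So inside N(0^n 1 0^j 1) the set A has relative measure
   floor(2^j r_n) / 2^j, and the density of A at spike n is r_n.  Every other point is decided
   after finitely many bits, so its density is 0 or 1, except 0^omega, where it is 0 because
   blocks with j <= n are rejected.  Only these countably many points are never decided, hence
   A may be taken open (accept exactly the points decided in) or closed (reject exactly the
   points decided out) without changing any density.

   Densities are computed from the splitting mu(Y & N_s) = mu(Y & N_s0) + mu(Y & N_s1), which
   for the covering outer measure rests on the compactness of 2^omega: mu(N_s) = 2^-|s|. *)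

From Stdlib Require Import Reals Lra Lia List Arith.
From Stdlib Require Import Classical ClassicalEpsilon FunctionalExtensionality.
From Coquelicot Require Import Coquelicot.
Open Scope R_scope.

Definition cyl (x : cantor) (n : nat) : cantor -> Prop :=
  fun y => forall i, (i < n)%nat -> y i = x i.

Definition upd (x : cantor) (n : nat) (b : bool) : cantor :=
  fun i => if Nat.eqb i n then b else x i.

Lemma restr_length z n : length (restr z n) = n.
Proof. unfold restr. now rewrite length_map, length_seq. Qed.

Lemma restr_nth z n i : (i < n)%nat -> nth i (restr z n) false = z i.
Proof.
  intro Hi. unfold restr.
  rewrite (nth_indep _ false (z 0%nat)) by now rewrite length_map, length_seq.
  now rewrite map_nth, seq_nth.
Qed.

Lemma N_restr z n y : N (restr z n) y <-> cyl z n y.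
Proof.
  unfold N, cyl. rewrite restr_length.
  split; intros H i Hi; rewrite H, ?restr_nth; auto.
Qed.

Lemma cyl_refl x n : cyl x n x.
Proof. now intros i _. Qed.

Lemma cyl_le x n m y : (m <= n)%nat -> cyl x n y -> cyl x m y.
Proof. intros Hm H i Hi. apply H. lia. Qed.

Lemma cyl_upd_parent x n b y : cyl (upd x n b) (S n) y -> cyl x n y.
Proof.
  intros H i Hi. rewrite H by lia. unfold upd.
  destruct (Nat.eqb_spec i n); [lia | reflexivity].
Qed.

Lemma cyl_upd_bit x n b y : cyl (upd x n b) (S n) y -> y n = b.
Proof. intro H. rewrite H by lia. unfold upd. now rewrite Nat.eqb_refl. Qed.

Lemma cyl_upd_self x n y : cyl x n y -> cyl (upd x n (y n)) (S n) y.
Proof.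
  intros H i Hi. unfold upd.
  destruct (Nat.eqb_spec i n) as [->|]; [reflexivity | apply H; lia].
Qed.

Lemma cyl_upd_base x n b : cyl x n (upd x n b).
Proof. intros i Hi. unfold upd. destruct (Nat.eqb_spec i n); [lia | reflexivity]. Qed.

Lemma least_witness (P : nat -> Prop) :
  (exists n, P n) -> exists n, P n /\ forall m, P m -> (n <= m)%nat.
Proof.
  intro H. destruct (dec_inh_nat_subset_has_unique_least_element P (fun n => classic (P n)) H)
    as [n [[Hn Hmin] _]].
  now exists n.
Qed.

Lemma eq_or_first_difference (x z : cantor) : z = x \/ exists i, z i <> x i /\ cyl x i z.
Proof.
  destruct (classic (exists i, z i <> x i)) as [Hdiff|Hsame].
  - right. destruct (least_witness _ Hdiff) as [i [Hi Hmin]]. exists i. split; [exact Hi|].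
    intros k Hk. apply NNPP. intro Hneq. specialize (Hmin k Hneq). lia.
  - left. apply functional_extensionality. intro i. apply NNPP. intro Hneq.
    apply Hsame. now exists i.
Qed.

Lemma pow_half_pos n : 0 < (/2) ^ n.
Proof. apply pow_lt. lra. Qed.

Lemma pow_half_S n : (/2) ^ S n = (/2) ^ n / 2.
Proof. simpl. lra. Qed.

Lemma pow_half_le n m : (n <= m)%nat -> (/2) ^ m <= (/2) ^ n.
Proof.
  induction 1 as [|m _ IH]; [lra|].
  rewrite pow_half_S. pose proof (pow_half_pos m). lra.
Qed.

Lemma sum_n_nonneg (a : nat -> R) N : (forall n, 0 <= a n) -> 0 <= sum_n a N.
Proof.
  intro Ha. induction N as [|N IH]; [rewrite sum_O; apply Ha|].
  rewrite sum_Sn. change (plus ?u ?v) with (u + v). specialize (Ha (S N)). lra.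
Qed.

Lemma term_le_sum_n (a : nat -> R) N : (forall n, 0 <= a n) -> a N <= sum_n a N.
Proof.
  intro Ha. destruct N as [|N]; [rewrite sum_O; lra|].
  rewrite sum_Sn. change (plus ?u ?v) with (u + v). pose proof (sum_n_nonneg a N Ha). lra.
Qed.

Lemma sum_n_le_series (a : nat -> R) l N : (forall n, 0 <= a n) -> is_series a l -> sum_n a N <= l.
Proof.
  intros Ha Hl. apply (is_lim_seq_incr_compare (sum_n a) l Hl).
  intro n. rewrite sum_Sn. change (plus ?u ?v) with (u + v). specialize (Ha (S n)). lra.
Qed.

Lemma term_le_series (a : nat -> R) l j : (forall n, 0 <= a n) -> is_series a l -> a j <= l.
Proof.
  intros Ha Hl. eapply Rle_trans;
    [apply (term_le_sum_n a j Ha) | exact (sum_n_le_series a l j Ha Hl)].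
Qed.

Lemma is_series_of_lim (a : nat -> R) (l : R) : is_lim_seq (sum_n a) l -> is_series a l.
Proof. exact (fun H => H). Qed.

Lemma is_series_single (w : R) : is_series (fun k => match k with O => w | S _ => 0 end) w.
Proof.
  apply is_series_of_lim, (is_lim_seq_ext (fun _ => w)); [|apply is_lim_seq_const].
  induction n as [|n IH]; [now rewrite sum_O|].
  rewrite sum_Sn, <- IH. change (w = w + 0). lra.
Qed.

Definition spread (a : nat -> R) (k : nat) : R := if Nat.even k then a (Nat.div2 k) else 0.

Lemma spread_double a m : spread a (2 * m) = a m.
Proof. unfold spread. now rewrite Nat.even_mul, Nat.div2_double. Qed.

Lemma spread_succ_double a m : spread a (S (2 * m)) = 0.
Proof. unfold spread. now rewrite Nat.even_succ, Nat.odd_mul. Qed.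

Lemma sum_n_spread a N : sum_n (spread a) N = sum_n a (Nat.div2 N).
Proof.
  assert (H : forall m, sum_n (spread a) (2 * m) = sum_n a m /\
                        sum_n (spread a) (S (2 * m)) = sum_n a m).
  { induction m as [|m [_ IH]].
    - rewrite sum_Sn, !sum_O, spread_succ_double. split; [reflexivity|].
      change (a 0%nat + 0 = a 0%nat). lra.
    - assert (E : sum_n (spread a) (2 * S m) = sum_n a (S m)).
      { replace (2 * S m)%nat with (S (S (2 * m))) by lia.
        rewrite sum_Sn, IH, sum_Sn.
        replace (S (S (2 * m))) with (2 * S m)%nat by lia. now rewrite spread_double. }
      split; [exact E|]. rewrite sum_Sn, E, spread_succ_double.
      change (sum_n a (S m) + 0 = sum_n a (S m)). lra. }
  destruct (Nat.Even_or_Odd N) as [[m ->]|[m ->]].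
  - rewrite Nat.div2_double. apply H.
  - replace (2 * m + 1)%nat with (S (2 * m)) by lia. rewrite Nat.div2_succ_double. apply H.
Qed.

Lemma is_series_spread a l : is_series a l -> is_series (spread a) l.
Proof.
  intro H. apply is_series_of_lim, (is_lim_seq_ext (fun n => sum_n a (Nat.div2 n))).
  { intro n. symmetry. apply sum_n_spread. }
  apply (is_lim_seq_subseq (sum_n a) l Nat.div2); [|exact H].
  intros P [M HM]. exists (2 * M)%nat. intros n Hn. apply HM.
  rewrite Nat.div2_div. apply Nat.div_le_lower_bound; lia.
Qed.

Lemma is_series_interleave (a b : nat -> R) la lb :
  is_series a la -> is_series b lb ->
  is_series (fun k => if Nat.even k then a (Nat.div2 k) else b (Nat.div2 k)) (la + lb).
Proof.
  intros Ha Hb.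
  assert (Hb' : is_series (fun k => match k with O => 0 | S k => spread b k end) lb).
  { apply is_series_decr_1. change (is_series (spread b) (lb + - 0)).
    rewrite Ropp_0, Rplus_0_r. now apply is_series_spread. }
  eapply is_series_ext; [|exact (is_series_plus _ _ _ _ (is_series_spread a la Ha) Hb')].
  intro k. change (plus ?u ?v) with (u + v).
  destruct (Nat.Even_or_Odd k) as [[m ->]|[m ->]].
  - rewrite spread_double, Nat.even_mul, Nat.div2_double. destruct m as [|m]; [simpl; lra|].
    replace (2 * S m)%nat with (S (S (2 * m))) by lia. rewrite spread_succ_double. simpl. lra.
  - replace (2 * m + 1)%nat with (S (2 * m)) by lia.
    rewrite spread_succ_double, spread_double, Nat.even_succ, Nat.odd_mul, Nat.div2_succ_double.
    simpl. lra.
Qed.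

(** * The covering outer measure *)

Lemma weight_nonneg o : 0 <= weight o.
Proof. destruct o; simpl; [apply Rlt_le, pow_half_pos | lra]. Qed.

Lemma cover_sums_nonneg X r : cover_sums X r -> 0 <= r.
Proof.
  intros [c [_ Hc]]. apply (Rle_trans _ (weight (c 0%nat))); [apply weight_nonneg|].
  apply (term_le_series _ _ _ (fun k => weight_nonneg (c k)) Hc).
Qed.

Lemma cover_sums_single X o :
  (forall y, X y -> exists s, o = Some s /\ N s y) -> cover_sums X (weight o).
Proof.
  intro HX. exists (fun k => match k with O => o | S _ => None end). split.
  - intros y Hy. destruct (HX y Hy) as [s Hs]. now exists 0%nat, s.
  - eapply is_series_ext; [|apply is_series_single]. now intros [|k].
Qed.

Lemma cover_sums_cyl X x n : (forall y, X y -> cyl x n y) -> cover_sums X ((/2) ^ n).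
Proof.
  intro HX. rewrite <- (restr_length x n).
  apply (cover_sums_single X (Some (restr x n))).
  intros y Hy. exists (restr x n). split; [reflexivity|]. now apply N_restr, HX.
Qed.

Lemma Glb_cover_sums X : Glb_Rbar (cover_sums X) = Finite (mu X).
Proof.
  destruct (Glb_Rbar_correct (cover_sums X)) as [Hlb Hglb].
  assert (Hle : Rbar_le (Glb_Rbar (cover_sums X)) 1).
  { apply Hlb. apply (cover_sums_cyl X (fun _ => false) 0). intros y _ i Hi. lia. }
  assert (Hge : Rbar_le 0 (Glb_Rbar (cover_sums X))).
  { apply Hglb. intros r Hr. exact (cover_sums_nonneg X r Hr). }
  unfold mu. destruct (Glb_Rbar (cover_sums X)); simpl in *; easy.
Qed.

Lemma mu_le_cover_sums X r : cover_sums X r -> mu X <= r.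
Proof.
  intro Hr. destruct (Glb_Rbar_correct (cover_sums X)) as [Hlb _].
  specialize (Hlb r Hr). now rewrite Glb_cover_sums in Hlb.
Qed.

Lemma mu_ge_lb X a : (forall r, cover_sums X r -> a <= r) -> a <= mu X.
Proof.
  intro Ha. destruct (Glb_Rbar_correct (cover_sums X)) as [_ Hglb].
  assert (H : Rbar_le a (Glb_Rbar (cover_sums X))) by exact (Hglb a Ha).
  now rewrite Glb_cover_sums in H.
Qed.

Lemma mu_nonneg X : 0 <= mu X.
Proof. apply mu_ge_lb, cover_sums_nonneg. Qed.

Lemma mu_mono (X Y : cantor -> Prop) : (forall y, X y -> Y y) -> mu X <= mu Y.
Proof.
  intro HXY. apply mu_ge_lb. intros r [c [Hc Hr]].
  apply mu_le_cover_sums. exists c. split; auto.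
Qed.

Lemma mu_ext (X Y : cantor -> Prop) : (forall y, X y <-> Y y) -> mu X = mu Y.
Proof. intro H. apply Rle_antisym; apply mu_mono; apply H. Qed.

Lemma mu_empty (X : cantor -> Prop) : (forall y, ~ X y) -> mu X = 0.
Proof.
  intro HX. apply Rle_antisym; [|apply mu_nonneg].
  apply (mu_le_cover_sums X (weight None)), cover_sums_single.
  intros y Hy. now exfalso; apply (HX y).
Qed.

Lemma mu_cyl_le x n : mu (cyl x n) <= (/2) ^ n.
Proof. apply mu_le_cover_sums, (cover_sums_cyl _ x). easy. Qed.

Lemma cover_sums_union X Y rX rY :
  cover_sums X rX -> cover_sums Y rY -> cover_sums (fun y => X y \/ Y y) (rX + rY).
Proof.
  intros [cX [HX SX]] [cY [HY SY]].
  exists (fun k => if Nat.even k then cX (Nat.div2 k) else cY (Nat.div2 k)). split.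
  - intros y [Hy|Hy].
    + destruct (HX y Hy) as [k Hk]. exists (2 * k)%nat.
      now rewrite Nat.even_mul, Nat.div2_double.
    + destruct (HY y Hy) as [k Hk]. exists (S (2 * k)).
      now rewrite Nat.even_succ, Nat.odd_mul, Nat.div2_succ_double.
  - eapply is_series_ext; [|exact (is_series_interleave _ _ _ _ SX SY)].
    intro k. simpl. now destruct (Nat.even k).
Qed.

Lemma mu_union X Y : mu (fun y => X y \/ Y y) <= mu X + mu Y.
Proof.
  apply Rnot_lt_le. intro Hlt.
  set (eps := (mu (fun y => X y \/ Y y) - (mu X + mu Y)) / 2).
  assert (Heps : 0 < eps) by (unfold eps; lra).
  assert (Happrox : forall Z, exists r, cover_sums Z r /\ r < mu Z + eps).
  { intro Z. apply NNPP. intro Hn.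
    assert (mu Z + eps <= mu Z); [|lra].
    apply mu_ge_lb. intros r Hr. apply Rnot_lt_le. intro. apply Hn. now exists r. }
  destruct (Happrox X) as [rX [HX HrX]], (Happrox Y) as [rY [HY HrY]].
  pose proof (mu_le_cover_sums _ _ (cover_sums_union X Y rX rY HX HY)).
  unfold eps in *. lra.
Qed.

(* Two cylinders are disjoint or nested, so [N s] meets [cyl x n] in a cylinder or not at all. *)
Definition piece (o : option (list bool)) (x : cantor) (n : nat) : option (list bool) :=
  match o with
  | Some s =>
      if excluded_middle_informative (exists y, N s y /\ cyl x n y)
      then Some (if Nat.leb n (length s) then s else restr x n)
      else None
  | None => None
  end.

Lemma piece_covers s x n y :
  N s y -> cyl x n y -> exists t, piece (Some s) x n = Some t /\ N t y.
Proof.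
  intros Hs Hy. simpl. destruct excluded_middle_informative as [_|Hn]; [|exfalso; eauto].
  eexists; split; [reflexivity|].
  destruct (Nat.leb_spec n (length s)); [exact Hs | now apply N_restr].
Qed.

Lemma weight_piece s x n :
  weight (piece (Some s) x n) =
  if excluded_middle_informative (exists y, N s y /\ cyl x n y)
  then (/2) ^ Nat.max (length s) n else 0.
Proof.
  simpl. destruct excluded_middle_informative; [|reflexivity]. simpl.
  destruct (Nat.leb_spec n (length s)).
  - now rewrite Nat.max_l.
  - now rewrite restr_length, Nat.max_r by lia.
Qed.

Lemma weight_piece_le o x n : weight (piece o x n) <= weight o.
Proof.
  destruct o as [s|]; [|simpl; lra]. rewrite weight_piece.
  destruct excluded_middle_informative; [apply pow_half_le; lia | apply weight_nonneg].
Qed.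

Lemma weight_piece_split o x n :
  weight (piece o (upd x n false) (S n)) + weight (piece o (upd x n true) (S n))
  <= weight (piece o x n).
Proof.
  destruct o as [s|]; [|simpl; lra]. rewrite !weight_piece.
  assert (Hparent : forall b, (exists y, N s y /\ cyl (upd x n b) (S n) y) ->
                              exists y, N s y /\ cyl x n y)
    by (intros b [y [Hs Hy]]; exists y; split; [exact Hs | exact (cyl_upd_parent x n b y Hy)]).
  pose proof (pow_half_pos (Nat.max (length s) n)) as Hpos.
  pose proof (pow_half_le (Nat.max (length s) n) (Nat.max (length s) (S n)) ltac:(lia)) as Hle.
  destruct excluded_middle_informative as [H0|H0];
  destruct excluded_middle_informative as [H1|H1];
  destruct excluded_middle_informative as [Hx|Hx];
  try (exfalso; apply Hx; eapply Hparent; eassumption); try lra.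
  destruct H0 as [y0 [Hs0 Hy0]], H1 as [y1 [Hs1 Hy1]].
  destruct (Nat.lt_ge_cases n (length s)) as [Hlt|Hge].
  - exfalso. apply cyl_upd_bit in Hy0, Hy1. rewrite Hs0 in Hy0 by exact Hlt.
    rewrite Hs1 in Hy1 by exact Hlt. congruence.
  - rewrite !Nat.max_r, pow_half_S in * by lia. lra.
Qed.

Lemma infinite_branch (P : cantor -> nat -> Prop) x n :
  (forall y m, P y m -> exists b, P (upd y m b) (S m)) -> P x n ->
  exists z, cyl x n z /\ forall k, exists y, P y (n + k)%nat /\ cyl y (n + k) z.
Proof.
  intros Hstep Hx.
  set (child := fun y m => if excluded_middle_informative (P (upd y m false) (S m))
                           then upd y m false else upd y m true).
  assert (Hchild : forall y m, P y m -> P (child y m) (S m)).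
  { intros y m Hy. unfold child. destruct excluded_middle_informative as [H|H]; [exact H|].
    destruct (Hstep y m Hy) as [[|] Hb]; [exact Hb | contradiction]. }
  assert (Hchild_cyl : forall y m, cyl y m (child y m)).
  { intros y m. unfold child. destruct excluded_middle_informative; apply cyl_upd_base. }
  set (g := fix g k := match k with O => x | S k => child (g k) (n + k)%nat end).
  assert (Hg : forall k, P (g k) (n + k)%nat).
  { induction k as [|k IH]; simpl.
    - now rewrite Nat.add_0_r.
    - rewrite Nat.add_succ_r. now apply Hchild. }
  assert (Hagree : forall k k' i, (k <= k')%nat -> (i < n + k)%nat -> g k' i = g k i).
  { intros k k' i Hk Hi. induction Hk as [|k' Hk IH]; [reflexivity|].
    rewrite <- IH. apply Hchild_cyl. lia. }
  exists (fun i => g (S i) i). split.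
  - intros i Hi. apply (Hagree 0%nat); lia.
  - intro k. exists (g k). split; [apply Hg|]. intros i Hi.
    destruct (le_lt_dec (S i) k).
    + symmetry. apply Hagree; lia.
    + apply Hagree; lia.
Qed.

Section Mass.

Variable c : nat -> option (list bool).
Variable r : R.
Hypothesis Hc : is_series (fun j => weight (c j)) r.

Definition mass (x : cantor) (n : nat) : R := Series (fun j => weight (piece (c j) x n)).

Lemma ex_series_piece x n : ex_series (fun j => weight (piece (c j) x n)).
Proof.
  apply (@ex_series_le R_AbsRing R_CompleteNormedModule _ (fun j => weight (c j)));
    [|now exists r].
  intro j. change (norm ?u) with (Rabs u).
  rewrite Rabs_pos_eq by apply weight_nonneg. apply weight_piece_le.
Qed.

Lemma mass_le x n : mass x n <= r.
Proof.
  rewrite <- (is_series_unique _ _ Hc). apply Series_le; [|now exists r].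
  intro j. split; [apply weight_nonneg | apply weight_piece_le].
Qed.

Lemma weight_piece_le_mass j x n : weight (piece (c j) x n) <= mass x n.
Proof.
  apply (term_le_series _ _ j (fun k => weight_nonneg _)), Series_correct, ex_series_piece.
Qed.

Lemma mass_split x n : mass (upd x n false) (S n) + mass (upd x n true) (S n) <= mass x n.
Proof.
  unfold mass. rewrite <- Series_plus by apply ex_series_piece.
  apply Series_le; [|apply ex_series_piece]. intro j. split.
  - pose proof (weight_nonneg (piece (c j) (upd x n false) (S n))).
    pose proof (weight_nonneg (piece (c j) (upd x n true) (S n))). lra.
  - apply weight_piece_split.
Qed.

Lemma mu_le_mass X x n :
  (forall y, X y -> cyl x n y -> exists j s, c j = Some s /\ N s y) ->
  mu (fun y => X y /\ cyl x n y) <= mass x n.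
Proof.
  intro HX. apply mu_le_cover_sums. exists (fun j => piece (c j) x n). split.
  - intros y [Hy Hxy]. destruct (HX y Hy Hxy) as [j [s [Hj Hs]]].
    exists j. rewrite Hj. now apply piece_covers.
  - apply Series_correct, ex_series_piece.
Qed.

Lemma mass_cyl_ge x n :
  (forall y, cyl x n y -> exists j s, c j = Some s /\ N s y) -> (/2) ^ n <= mass x n.
Proof.
  (* Compactness: a cover of mass < 2^-n on [cyl x n] has a child of mass < 2^-(n+1), hence a
     branch z along which this persists; but z lies in a single piece of mass 2^-(n+|s|). *)
  intro Hcov. apply Rnot_lt_le. intro Hlt.
  destruct (infinite_branch (fun y m => mass y m < (/2) ^ m) x n) as [z [Hxz Hz]];
    [|exact Hlt|].
  { intros y m Hy. apply NNPP. intro Hn.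
    assert (Hb : forall b, (/2) ^ S m <= mass (upd y m b) (S m)).
    { intro b. apply Rnot_lt_le. intro. apply Hn. now exists b. }
    pose proof (mass_split y m). pose proof (Hb false). pose proof (Hb true).
    rewrite pow_half_S in *. lra. }
  destruct (Hcov z Hxz) as [j [s [Hj Hs]]].
  destruct (Hz (length s)) as [y [Hy Hyz]].
  assert (Hw : weight (piece (c j) y (n + length s)%nat) = (/2) ^ (n + length s)).
  { rewrite Hj, weight_piece. destruct excluded_middle_informative as [_|Hn].
    - now rewrite Nat.max_r by lia.
    - exfalso. apply Hn. now exists z. }
  pose proof (weight_piece_le_mass j y (n + length s)%nat). lra.
Qed.

End Mass.

Lemma mu_cyl x n : mu (cyl x n) = (/2) ^ n.
Proof.
  apply Rle_antisym; [apply mu_cyl_le|]. apply mu_ge_lb. intros r [c [Hcov Hc]].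
  eapply Rle_trans; [apply (mass_cyl_ge c r Hc x n) | apply (mass_le c r Hc)].
  intros y Hy. now apply Hcov.
Qed.

Lemma mu_cyl_split Y x n :
  mu (fun y => Y y /\ cyl x n y) =
  mu (fun y => Y y /\ cyl (upd x n false) (S n) y) +
  mu (fun y => Y y /\ cyl (upd x n true) (S n) y).
Proof.
  apply Rle_antisym.
  - eapply Rle_trans; [|apply mu_union]. apply mu_mono. intros y [Hy Hxy].
    pose proof (cyl_upd_self x n y Hxy). destruct (y n); [right | left]; auto.
  - apply mu_ge_lb. intros r [c [Hcov Hc]].
    assert (Hb : forall b, mu (fun y => Y y /\ cyl (upd x n b) (S n) y)
                           <= mass c (upd x n b) (S n)).
    { intro b. apply (mu_le_mass c r Hc). intros y Hy Hxy. apply Hcov.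
      split; [exact Hy | eapply cyl_upd_parent; exact Hxy]. }
    pose proof (mass_split c r Hc x n). pose proof (mass_le c r Hc x n).
    pose proof (Hb false). pose proof (Hb true). lra.
Qed.

(* A geometric majorant of the error (k+1) 2^-k of the depth-k approximations below. *)
Definition err (k : nat) : R := 2 * (3/4) ^ k.

Lemma err_step k : (err k + (/2) ^ k) / 2 <= err (S k).
Proof.
  unfold err. simpl. assert ((/2) ^ k <= (3/4) ^ k) by (apply pow_incr; lra). lra.
Qed.

Lemma err_nonneg k : 0 <= err k.
Proof. unfold err. pose proof (pow_lt (3/4) k ltac:(lra)). lra. Qed.

Lemma le_of_le_plus_err a b : (forall k, a <= b + err k) -> a <= b.
Proof.
  intro H.
  assert (Herr : is_lim_seq err 0).
  { replace (Finite 0) with (Rbar_mult 2 0) by (simpl; f_equal; ring).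
    apply is_lim_seq_scal_l, is_lim_seq_geom. rewrite Rabs_pos_eq; lra. }
  assert (Hlim : is_lim_seq (fun k => b + err k) (b + 0))
    by (apply (is_lim_seq_plus' _ _ b 0); [apply is_lim_seq_const | exact Herr]).
  pose proof (is_lim_seq_le (fun _ => a) _ a (b + 0) H (is_lim_seq_const a) Hlim).
  simpl in *. lra.
Qed.

Lemma is_lim_seq_pinch (v : nat -> R) r K M0 :
  (forall M, (M0 <= M)%nat -> r - (/2) ^ (M - K) <= v M <= r + (/2) ^ (M - K)) ->
  is_lim_seq v r.
Proof.
  intro H.
  assert (Hgeom : is_lim_seq (fun M => (/2) ^ (M - K)) 0).
  { apply (is_lim_seq_incr_n _ K), (is_lim_seq_ext (fun M => (/2) ^ M)).
    - intro M. now replace (M + K - K)%nat with M by lia.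
    - apply is_lim_seq_geom. rewrite Rabs_pos_eq; lra. }
  apply (is_lim_seq_le_le_loc (fun M => r - (/2) ^ (M - K)) v (fun M => r + (/2) ^ (M - K))).
  - exists M0. exact H.
  - replace (Finite r) with (Rbar_minus r 0) by (simpl; f_equal; ring).
    apply is_lim_seq_minus'; [apply is_lim_seq_const | exact Hgeom].
  - replace (Finite r) with (Rbar_plus r 0) by (simpl; f_equal; ring).
    apply is_lim_seq_plus'; [apply is_lim_seq_const | exact Hgeom].
Qed.

Lemma density_unique X z r1 r2 : density_at X z r1 -> density_at X z r2 -> r1 = r2.
Proof.
  intros H1 H2. apply is_lim_seq_unique in H1, H2. rewrite H1 in H2. now injection H2.
Qed.

(** * Automata reading points of 2^omega *)

Section Automaton.

Context {St : Type} (init : St) (trans : St -> bool -> St) (out : St -> option bool).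
Hypothesis out_trans : forall s b v, out s = Some v -> out (trans s b) = Some v.

Fixpoint run (y : cantor) (m : nat) : St :=
  match m with O => init | S m => trans (run y m) (y m) end.

Lemma run_cyl x n y : cyl x n y -> run y n = run x n.
Proof.
  induction n as [|n IH]; intro H; simpl; [reflexivity|].
  rewrite IH by (apply (cyl_le x (S n)); [lia | exact H]). now rewrite H by lia.
Qed.

Lemma run_upd x n b : run (upd x n b) (S n) = trans (run x n) b.
Proof.
  simpl. rewrite (run_cyl x n (upd x n b) (cyl_upd_base x n b)).
  unfold upd. now rewrite Nat.eqb_refl.
Qed.

Lemma out_run_mono y n m v : (n <= m)%nat -> out (run y n) = Some v -> out (run y m) = Some v.
Proof. induction 1; simpl; auto. Qed.

Lemma out_run_functional y n m v w :
  out (run y n) = Some v -> out (run y m) = Some w -> v = w.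
Proof.
  intros Hn Hm. destruct (Nat.le_ge_cases n m).
  - rewrite (out_run_mono y n m v) in Hm by assumption. congruence.
  - rewrite (out_run_mono y m n w) in Hn by assumption. congruence.
Qed.

Lemma is_open_eventually v : is_open (fun y => exists m, out (run y m) = Some v).
Proof.
  intros x [m Hm]. exists m. intros y Hy. exists m.
  rewrite (run_cyl x m y); [exact Hm | now apply N_restr].
Qed.

Lemma is_closed_never v : is_closed (fun y => forall m, out (run y m) <> Some v).
Proof.
  intros x Hx. apply not_all_ex_not in Hx as [m Hm]. apply NNPP in Hm.
  exists m. intros y Hy Hall. apply (Hall m).
  rewrite (run_cyl x m y); [exact Hm | now apply N_restr].
Qed.

Fixpoint approx (u : R) (s : St) (k : nat) {struct k} : R :=
  match out s with
  | Some v => if v then 1 else 0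
  | None =>
      match k with
      | O => u
      | S k => (approx u (trans s false) k + approx u (trans s true) k) / 2
      end
  end.

Lemma approx_decided u s k v : out s = Some v -> approx u s k = if v then 1 else 0.
Proof. intro H. destruct k; simpl; now rewrite H. Qed.

Lemma approx_undecided_0 u s : out s = None -> approx u s 0 = u.
Proof. intro H. simpl. now rewrite H. Qed.

Lemma approx_undecided_S u s k : out s = None ->
  approx u s (S k) = (approx u (trans s false) k + approx u (trans s true) k) / 2.
Proof. intro H. simpl. now rewrite H. Qed.

Lemma approx_range u s k : 0 <= u <= 1 -> 0 <= approx u s k <= 1.
Proof.
  intro Hu. revert s. induction k as [|k IH]; intro s; simpl;
    destruct (out s) as [[]|]; try lra.
  pose proof (IH (trans s false)). pose proof (IH (trans s true)). lra.
Qed.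

Section Recognizer.

Variable Y : cantor -> Prop.
Hypothesis Y_accept : forall y m, out (run y m) = Some true -> Y y.
Hypothesis Y_reject : forall y m, out (run y m) = Some false -> ~ Y y.

Lemma mu_run_accepted x n :
  out (run x n) = Some true -> mu (fun y => Y y /\ cyl x n y) = (/2) ^ n.
Proof.
  intro Hout. rewrite <- (mu_cyl x n). apply mu_ext. intro y. split; [tauto|].
  intro Hy. split; [|exact Hy]. apply (Y_accept y n). now rewrite (run_cyl x n y Hy).
Qed.

Lemma mu_run_rejected x n : out (run x n) = Some false -> mu (fun y => Y y /\ cyl x n y) = 0.
Proof.
  intro Hout. apply mu_empty. intros y [HYy Hy].
  apply (Y_reject y n); [now rewrite (run_cyl x n y Hy) | exact HYy].
Qed.

Lemma mu_run_bounds k x n :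
  (/2) ^ n * approx 0 (run x n) k <= mu (fun y => Y y /\ cyl x n y)
  <= (/2) ^ n * approx 1 (run x n) k.
Proof.
  revert x n. induction k as [|k IH]; intros x n;
    destruct (out (run x n)) as [[]|] eqn:Hout;
    try (rewrite !(approx_decided _ _ _ _ Hout), ?mu_run_accepted, ?mu_run_rejected
           by exact Hout; lra).
  - rewrite !approx_undecided_0 by exact Hout.
    pose proof (mu_nonneg (fun y => Y y /\ cyl x n y)).
    pose proof (mu_mono (fun y => Y y /\ cyl x n y) (cyl x n) (fun y Hy => proj2 Hy)).
    rewrite mu_cyl in *. lra.
  - rewrite !approx_undecided_S, mu_cyl_split by exact Hout.
    pose proof (IH (upd x n false) (S n)). pose proof (IH (upd x n true) (S n)).
    rewrite !run_upd, pow_half_S in *. lra.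
Qed.

Definition ratio (z : cantor) (M : nat) : R :=
  mu (fun y => Y y /\ N (restr z M) y) / mu (N (restr z M)).

Lemma ratio_bounds z M k : approx 0 (run z M) k <= ratio z M <= approx 1 (run z M) k.
Proof.
  unfold ratio. rewrite (mu_ext (N (restr z M)) (cyl z M)) by apply N_restr.
  rewrite (mu_ext (fun y => Y y /\ N (restr z M) y) (fun y => Y y /\ cyl z M y))
    by (intro y; now rewrite N_restr).
  rewrite mu_cyl. pose proof (pow_half_pos M). pose proof (mu_run_bounds k z M).
  split; [apply Rle_div_r | apply Rle_div_l]; lra.
Qed.

Lemma ratio_le_of_approx z M b : (forall k, approx 1 (run z M) k <= b + err k) -> ratio z M <= b.
Proof.
  intro H. apply le_of_le_plus_err. intro k.
  pose proof (ratio_bounds z M k). pose proof (H k). lra.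
Qed.

Lemma ratio_ge_of_approx z M b : (forall k, b - err k <= approx 0 (run z M) k) -> b <= ratio z M.
Proof.
  intro H. apply le_of_le_plus_err. intro k.
  pose proof (ratio_bounds z M k). pose proof (H k). lra.
Qed.

Lemma density_decided z m v : out (run z m) = Some v -> density_at Y z (if v then 1 else 0).
Proof.
  intro Hm. apply (is_lim_seq_pinch (ratio z) _ 0 m). intros M HM.
  pose proof (ratio_bounds z M 0).
  rewrite !(approx_decided _ _ _ v (out_run_mono z m M v HM Hm)) in *.
  pose proof (pow_half_pos (M - 0)). lra.
Qed.

End Recognizer.

End Automaton.

(** * Binary digits *)

Fixpoint dyadic_floor (r : R) (i : nat) : R :=
  match i with
  | O => 0
  | S i => let t := dyadic_floor r i in
           if Rle_dec (t + (/2) ^ S i) r then t + (/2) ^ S i else t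
  end.

Definition digit (r : R) (i : nat) : bool :=
  if Rle_dec (dyadic_floor r i + (/2) ^ S i) r then true else false.

Lemma dyadic_floor_S r i :
  dyadic_floor r (S i) = dyadic_floor r i + (if digit r i then (/2) ^ S i else 0).
Proof. simpl. unfold digit. destruct Rle_dec; lra. Qed.

Lemma dyadic_floor_bounds r i : 0 <= r < 1 -> dyadic_floor r i <= r < dyadic_floor r i + (/2) ^ i.
Proof.
  intro Hr. induction i as [|i IH]; [simpl; lra|].
  rewrite dyadic_floor_S. unfold digit. rewrite pow_half_S. destruct Rle_dec; lra.
Qed.

Lemma dyadic_floor_mono r i j : (i <= j)%nat -> dyadic_floor r i <= dyadic_floor r j.
Proof.
  induction 1 as [|j _ IH]; [lra|]. rewrite dyadic_floor_S.
  pose proof (pow_half_pos (S j)). destruct (digit r j); lra.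
Qed.

Definition digits_value (r : R) (i j : nat) : R :=
  (dyadic_floor r j - dyadic_floor r i) / (/2) ^ i.

Lemma digits_value_S r i j :
  digits_value r (S i) j =
  if digit r i then 2 * digits_value r i j - 1 else 2 * digits_value r i j.
Proof.
  unfold digits_value. rewrite dyadic_floor_S, pow_half_S.
  pose proof (pow_half_pos i). destruct (digit r i); field; lra.
Qed.

Lemma digits_value_range r i j : 0 <= r < 1 -> (i <= j)%nat -> 0 <= digits_value r i j < 1.
Proof.
  intros Hr Hij. unfold digits_value. pose proof (pow_half_pos i).
  pose proof (dyadic_floor_mono r i j Hij).
  pose proof (dyadic_floor_bounds r i Hr). pose proof (dyadic_floor_bounds r j Hr).
  split; [apply Rdiv_le_0_compat; lra | apply Rlt_div_l; lra].
Qed.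

Lemma digits_value_diag r j : digits_value r j j = 0.
Proof. unfold digits_value. rewrite Rminus_diag. apply Rdiv_0_l. Qed.

Lemma digits_value_0 r j : digits_value r 0 j = dyadic_floor r j.
Proof. unfold digits_value. simpl. field. Qed.

(* [Zeros n]: read 0^n.  [Gap r n j]: read 0^n 1 0^j, where [code n = Some r].  [Cmp r j i]:
   after a further 1, the next i bits agree with the first i binary digits of r (out of j).
   A leading 1 is accepted, so that density 1 is attained. *)
Inductive state : Type :=
  | Zeros (n : nat)
  | Gap (r : R) (n j : nat)
  | Cmp (r : R) (j i : nat)
  | Done (v : bool).

Definition verdict (s : state) : option bool :=
  match s with Done v => Some v | _ => None end.

Definition step (code : nat -> option R) (s : state) (b : bool) : state :=
  match s with
  | Zeros n =>
      if b then match n, code n with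
                | O, _ => Done true
                | S _, Some r => Gap r n 0
                | S _, None => Done false
                end
      else Zeros (S n)
  | Gap r n j => if b then (if Nat.leb j n then Done false else Cmp r j 0) else Gap r n (S j)
  | Cmp r j i =>
      if Bool.eqb b (digit r i)
      then (if Nat.eqb (S i) j then Done false else Cmp r j (S i))
      else Done (digit r i)
  | Done v => Done v
  end.

Lemma verdict_step code s b v : verdict s = Some v -> verdict (step code s b) = Some v.
Proof. now destruct s. Qed.

Definition zeros : cantor := fun _ => false.

Definition spike (n : nat) : cantor := fun i => Nat.eqb i n.

Section Construction.

Variable code : nat -> option R.
Hypothesis code_range : forall n r, code n = Some r -> 0 <= r < 1.
Hypothesis code_0 : code 0 = None.

Local Notation trace := (run (Zeros 0) (step code)).
Local Notation value := (approx (step code) verdict).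

Lemma value_Done u v k : value u (Done v) k = if v then 1 else 0.
Proof. now destruct k. Qed.

Lemma value_Cmp u r j i k : 0 <= u <= 1 -> 0 <= r < 1 -> (i < j)%nat ->
  digits_value r i j - (/2) ^ k <= value u (Cmp r j i) k <= digits_value r i j + (/2) ^ k.
Proof.
  intros Hu Hr. revert i. induction k as [|k IH]; intros i Hij.
  - rewrite approx_undecided_0 by reflexivity.
    pose proof (digits_value_range r i j Hr ltac:(lia)). simpl. lra.
  - rewrite approx_undecided_S by reflexivity. cbn [step].
    assert (Hnext : digits_value r (S i) j - (/2) ^ k
                    <= value u (if Nat.eqb (S i) j then Done false else Cmp r j (S i)) k
                    <= digits_value r (S i) j + (/2) ^ k).
    { destruct (Nat.eqb_spec (S i) j) as [<-|].
      - rewrite digits_value_diag, value_Done. pose proof (pow_half_pos k). lra.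
      - apply IH. lia. }
    rewrite digits_value_S in Hnext. rewrite pow_half_S.
    pose proof (pow_half_pos k).
    destruct (digit r i); simpl Bool.eqb; cbv beta iota; rewrite value_Done; lra.
Qed.

Lemma value_Gap u r n j k : 0 <= u <= 1 -> 0 <= r < 1 -> (n < j)%nat ->
  r - (/2) ^ j - err k <= value u (Gap r n j) k <= r + err k.
Proof.
  intros Hu Hr. revert j. induction k as [|k IH]; intros j Hj.
  - rewrite approx_undecided_0 by reflexivity. pose proof (pow_half_pos j).
    unfold err. simpl. lra.
  - rewrite approx_undecided_S by reflexivity. cbn [step].
    destruct (Nat.leb_spec j n) as [|_]; [lia|].
    pose proof (IH (S j) ltac:(lia)). pose proof (err_step k).
    pose proof (value_Cmp u r j 0 k Hu Hr ltac:(lia)). rewrite digits_value_0 in *.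
    pose proof (dyadic_floor_bounds r j Hr). rewrite pow_half_S in *. lra.
Qed.

Lemma value_Gap_early r n j k : (j <= S n)%nat ->
  value 1 (Gap r n j) k <= (/2) ^ (S n - j) + (/2) ^ k.
Proof.
  revert j. induction k as [|k IH]; intros j Hj.
  - rewrite approx_undecided_0 by reflexivity. pose proof (pow_half_pos (S n - j)).
    rewrite pow_O. lra.
  - destruct (Nat.eq_dec j (S n)) as [->|].
    + rewrite Nat.sub_diag. pose proof (approx_range (step code) verdict 1 (Gap r n (S n)) (S k)).
      pose proof (pow_half_pos (S k)). simpl pow at 1. lra.
    + rewrite approx_undecided_S by reflexivity. cbn [step].
      destruct (Nat.leb_spec j n); [|lia].
      rewrite value_Done. pose proof (IH (S j) ltac:(lia)).
      replace (S n - j)%nat with (S (S n - S j)) by lia. rewrite !pow_half_S. lra.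
Qed.

Lemma value_Zeros n k : value 1 (Zeros n) k <= 2 * (/2) ^ n + err k.
Proof.
  revert n. induction k as [|k IH]; intro n.
  - rewrite approx_undecided_0 by reflexivity. pose proof (pow_half_pos n).
    unfold err. simpl. lra.
  - pose proof (err_step k). pose proof (pow_half_pos k).
    destruct n as [|n].
    + pose proof (approx_range (step code) verdict 1 (Zeros 0) (S k)).
      pose proof (err_nonneg (S k)). simpl pow. lra.
    + rewrite approx_undecided_S by reflexivity. cbn [step].
      pose proof (IH (S (S n))).
      assert (Hone : value 1 (match code (S n) with
                              | Some r => Gap r (S n) 0
                              | None => Done false end) k
                     <= (/2) ^ S (S n) + (/2) ^ k).
      { destruct (code (S n)) as [r|].
        - apply value_Gap_early. lia.
        - rewrite value_Done. pose proof (pow_half_pos (S (S n))). lra. }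
      pose proof (pow_half_pos n). rewrite !pow_half_S in *. lra.
Qed.

Lemma step_Zeros_one n : n <> 0%nat ->
  step code (Zeros n) true = match code n with Some r => Gap r n 0 | None => Done false end.
Proof. now destruct n. Qed.

Lemma trace_zeros y m : cyl zeros m y -> trace y m = Zeros m.
Proof.
  induction m as [|m IH]; intro Hy; [reflexivity|]. cbn [run].
  rewrite IH by (apply (cyl_le zeros (S m)); [lia | exact Hy]). now rewrite Hy by lia.
Qed.

Lemma trace_spike n r j y :
  code n = Some r -> cyl (spike n) (S n + j) y -> trace y (S n + j) = Gap r n j.
Proof.
  intro Hn. assert (Hn0 : n <> 0%nat) by (intros ->; congruence).
  induction j as [|j IH]; intro Hy.
  - rewrite Nat.add_0_r in *. cbn [run].
    rewrite trace_zeros.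
    2: { intros i Hi. rewrite Hy by lia. unfold spike, zeros. apply Nat.eqb_neq. lia. }
    rewrite Hy by lia. unfold spike. now rewrite Nat.eqb_refl, step_Zeros_one, Hn.
  - rewrite Nat.add_succ_r in *. cbn [run].
    rewrite IH by (apply (cyl_le _ (S (S n + j))); [lia | exact Hy]).
    rewrite Hy by lia. unfold spike.
    now replace (Nat.eqb (S n + j) n) with false by (symmetry; apply Nat.eqb_neq; lia).
Qed.

Lemma trace_Cmp_decided y p r j i :
  (i < j)%nat -> trace y p = Cmp r j i -> exists m v, verdict (trace y m) = Some v.
Proof.
  remember (j - i)%nat as d eqn:Hd. revert p i Hd.
  induction d as [|d IH]; intros p i Hd Hij Hp; [lia|].
  assert (Hnext : trace y (S p) = step code (Cmp r j i) (y p)) by (cbn [run]; now rewrite Hp).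
  cbn [step] in Hnext.
  destruct (Bool.eqb (y p) (digit r i)); [destruct (Nat.eqb_spec (S i) j)|].
  - exists (S p), false. now rewrite Hnext.
  - apply (IH (S p) (S i)); [lia | lia | exact Hnext].
  - exists (S p), (digit r i). now rewrite Hnext.
Qed.

Lemma trace_second_one n r i z :
  code n = Some r -> (n < i)%nat -> cyl (spike n) i z -> z i = true ->
  exists m v, verdict (trace z m) = Some v.
Proof.
  intros Hn Hi Hz Hzi.
  assert (exists j, i = (S n + j)%nat) as [j ->] by (exists (i - S n)%nat; lia).
  assert (Hnext : trace z (S (S n + j)) = step code (Gap r n j) true)
    by (cbn [run]; now rewrite (trace_spike n r j z Hn Hz), Hzi).
  cbn [step] in Hnext. destruct (Nat.leb_spec j n).
  - exists (S (S n + j)), false. now rewrite Hnext.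
  - apply (trace_Cmp_decided z (S (S n + j)) r j 0); [lia | exact Hnext].
Qed.

Lemma trace_classify z :
  (exists m v, verdict (trace z m) = Some v) \/ z = zeros \/
  (exists n r, code n = Some r /\ z = spike n).
Proof.
  destruct (eq_or_first_difference zeros z) as [->|[n [Hn Hzn]]]; [now right; left|].
  assert (Hone : z n = true)
    by (destruct (z n); [reflexivity | now exfalso; apply Hn]).
  assert (Hstep : trace z (S n) = step code (Zeros n) true)
    by (cbn [run]; now rewrite trace_zeros, Hone).
  destruct (Nat.eq_dec n 0) as [->|Hn0]; [left; exists 1%nat, true; now rewrite Hstep|].
  rewrite step_Zeros_one in Hstep by exact Hn0.
  destruct (code n) as [r|] eqn:Hr; [|left; exists (S n), false; now rewrite Hstep].
  assert (Hspike : cyl (spike n) (S n) z).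
  { intros i Hi. unfold spike. destruct (Nat.eq_dec i n) as [->|].
    - now rewrite Hone, Nat.eqb_refl.
    - rewrite (Hzn i) by lia. symmetry. now apply Nat.eqb_neq. }
  destruct (eq_or_first_difference (spike n) z) as [->|[i [Hi Hzi]]];
    [right; right; now exists n, r|].
  left. destruct (Nat.lt_ge_cases n i) as [Hni|]; [|exfalso; apply Hi, Hspike; lia].
  apply (trace_second_one n r i z Hr Hni Hzi).
  destruct (z i); [reflexivity|]. exfalso. apply Hi. unfold spike.
  symmetry. apply Nat.eqb_neq. lia.
Qed.

Section Density.

Variable Y : cantor -> Prop.
Hypothesis Y_accept : forall y m, verdict (trace y m) = Some true -> Y y.
Hypothesis Y_reject : forall y m, verdict (trace y m) = Some false -> ~ Y y.

Lemma density_zeros : density_at Y zeros 0.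
Proof.
  apply (is_lim_seq_pinch (ratio Y zeros) 0 1 1). intros M HM.
  assert (Hup : ratio Y zeros M <= 2 * (/2) ^ M).
  { apply (ratio_le_of_approx (Zeros 0) (step code) verdict Y Y_accept Y_reject).
    intro k. rewrite (trace_zeros zeros M (cyl_refl zeros M)). apply value_Zeros. }
  assert (Hlow : 0 <= ratio Y zeros M).
  { apply (ratio_ge_of_approx (Zeros 0) (step code) verdict Y Y_accept Y_reject).
    intro k. pose proof (approx_range (step code) verdict 0 (trace zeros M) k).
    pose proof (err_nonneg k). lra. }
  assert (E : (/2) ^ M = (/2) ^ (M - 1) / 2)
    by (replace M with (S (M - 1)) at 1 by lia; apply pow_half_S).
  pose proof (pow_half_pos (M - 1)). lra.
Qed.

Lemma density_spike n r : code n = Some r -> density_at Y (spike n) r.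
Proof.
  intro Hn. pose proof (code_range n r Hn) as Hr.
  apply (is_lim_seq_pinch (ratio Y (spike n)) r (S n) (S n + S n)). intros M HM.
  set (j := (M - S n)%nat).
  assert (Htrace : trace (spike n) M = Gap r n j).
  { replace M with (S n + j)%nat by lia. apply trace_spike; [exact Hn | apply cyl_refl]. }
  assert (Hup : ratio Y (spike n) M <= r).
  { apply (ratio_le_of_approx (Zeros 0) (step code) verdict Y Y_accept Y_reject).
    intro k. rewrite Htrace. apply value_Gap; [lra | exact Hr | lia]. }
  assert (Hlow : r - (/2) ^ j <= ratio Y (spike n) M).
  { apply (ratio_ge_of_approx (Zeros 0) (step code) verdict Y Y_accept Y_reject).
    intro k. rewrite Htrace. apply value_Gap; [lra | exact Hr | lia]. }
  pose proof (pow_half_pos j). fold j. lra.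
Qed.

Lemma density_values z r :
  density_at Y z r -> r = 0 \/ r = 1 \/ exists n, code n = Some r /\ z = spike n.
Proof.
  intro Hz. destruct (trace_classify z) as [[m [v Hm]]|[->|[n [r' [Hn ->]]]]].
  - pose proof (density_decided _ _ _ (verdict_step code) Y Y_accept Y_reject z m v Hm) as Hv.
    rewrite (density_unique Y z r _ Hz Hv). destruct v; auto.
  - left. exact (density_unique Y zeros r 0 Hz density_zeros).
  - right; right. exists n. split; [|reflexivity].
    now rewrite (density_unique Y (spike n) r r' Hz (density_spike n r' Hn)).
Qed.

Lemma solid_good_density (Sr : R -> Prop) :
  (forall n r, code n = Some r -> Sr r) ->
  (forall r, Sr r -> exists n, code n = Some r) ->
  (forall n n' r, code n = Some r -> code n' = Some r -> n = n') ->
  (forall r, Sr r -> 0 < r < 1) ->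
  solid Y /\ good_density Sr Y.
Proof.
  intros code_in code_onto code_inj Hrange. split; [|split].
  - intro z. destruct (trace_classify z) as [[m [v Hm]]|[->|[n [r [Hn ->]]]]].
    + eexists. exact (density_decided _ _ _ (verdict_step code) Y Y_accept Y_reject z m v Hm).
    + exists 0. exact density_zeros.
    + exists r. exact (density_spike n r Hn).
  - intro r. split.
    + intros [z Hz]. destruct (density_values z r Hz) as [->|[->|[n [Hn _]]]]; auto.
      left. exact (code_in n r Hn).
    + intros [Hr|[->| ->]].
      * destruct (code_onto r Hr) as [n Hn]. exists (spike n). exact (density_spike n r Hn).
      * exists zeros. exact density_zeros.
      * exists (fun _ => true).
        exact (density_decided _ _ _ (verdict_step code) Y Y_accept Y_reject
                 (fun _ => true) 1 true eq_refl).
  - intros r Hr. destruct (code_onto r Hr) as [n Hn].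
    exists (spike n). split; [exact (density_spike n r Hn)|].
    intros z Hz. pose proof (Hrange r Hr).
    destruct (density_values z r Hz) as [->|[->|[n' [Hn' ->]]]]; [lra | lra|].
    f_equal. exact (code_inj n n' r Hn Hn').
Qed.

End Density.
End Construction.

Lemma code_of_enumeration (Sr : R -> Prop) :
  countable_set Sr ->
  exists code : nat -> option R, code 0%nat = None /\
    (forall n r, code n = Some r -> Sr r) /\
    (forall r, Sr r -> exists n, code n = Some r) /\
    (forall n n' r, code n = Some r -> code n' = Some r -> n = n').
Proof.
  intros [f Hf].
  set (first := fun m => Sr (f m) /\ forall m', (m' < m)%nat -> f m' <> f m).
  exists (fun n => match n with
                   | O => None
                   | S m => if excluded_middle_informative (first m) then Some (f m) else None
                   end).
  split; [reflexivity|]. split; [|split].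
  - intros [|m] r H; [discriminate|].
    destruct excluded_middle_informative as [[Hm _]|]; [|discriminate].
    now injection H as <-.
  - intros r Hr. destruct (least_witness (fun m => f m = r) (Hf r Hr)) as [m [Hm Hmin]].
    exists (S m). destruct excluded_middle_informative as [_|Hn]; [now rewrite Hm|].
    exfalso. apply Hn. split; [now rewrite Hm|].
    intros m' Hm' E. specialize (Hmin m' (eq_trans E Hm)). lia.
  - intros [|m] [|m'] r H H'; try discriminate.
    destruct excluded_middle_informative as [[_ Hm]|]; [|discriminate].
    destruct excluded_middle_informative as [[_ Hm']|]; [|discriminate].
    injection H as E. injection H' as E'. f_equal.
    destruct (Nat.lt_trichotomy m m') as [Hlt|[Heq|Hlt]]; [|exact Heq|].
    + exfalso. apply (Hm' m Hlt). congruence.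
    + exfalso. apply (Hm m' Hlt). congruence.
Qed.

Theorem theorem3p11 :
  forall S : R -> Prop,
    countable_set S ->
    (forall r, S r -> 0 < r < 1) ->
    (exists A : cantor -> Prop, is_open A /\ solid A /\ good_density S A) /\
    (exists A : cantor -> Prop, is_closed A /\ solid A /\ good_density S A).
Proof.
  intros S HS Hrange.
  destruct (code_of_enumeration S HS) as [code [code_0 [code_in [code_onto code_inj]]]].
  assert (code_range : forall n r, code n = Some r -> 0 <= r < 1)
    by (intros n r Hn; pose proof (Hrange r (code_in n r Hn)); lra).
  set (trace := run (Zeros 0) (step code)).
  pose proof (out_run_functional (Zeros 0) (step code) verdict (verdict_step code)) as Hfun.
  split.
  - exists (fun y => exists m, verdict (trace y m) = Some true).
    split; [apply is_open_eventually|].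
    apply (solid_good_density code code_range code_0); auto.
    + intros y m Hm. now exists m.
    + intros y m Hm [m' Hm']. discriminate (Hfun y m m' _ _ Hm Hm').
  - exists (fun y => forall m, verdict (trace y m) <> Some false).
    split; [apply is_closed_never|].
    apply (solid_good_density code code_range code_0); auto.
    + intros y m Hm m' Hm'. discriminate (Hfun y m m' _ _ Hm Hm').
    + intros y m Hm Hy. exact (Hy m Hm).
Qed.
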